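(* Let $\mathsf{L}$ be a Kripke complete extension of $\mathsf{MIPC}$. Then $\tau\mathsf{L}=\mathsf{MS4}+\{\varphi^t:\mathsf{L}\vdash\varphi\}$ is a modal companion of $\mathsf{L}$, i.e., for every formula $\varphi$ of $\mathcal{L}_{\forall\exists}$, $\mathsf{L}\vdash\varphi$ iff $\tau\mathsf{L}\vdash\varphi^t$.
   Context: $\mathsf{MIPC}$ is the smallest set of formulas in the bimodal language $\mathcal{L}_{\forall\exists}$ containing all theorems of $\mathsf{IPC}$; $\forall(p\wedge q)\leftrightarrow(\forall p\wedge\forall q)$, $\forall p\to p$, $\forall p\to\forall\forall p$; $\exists(p\vee q)\leftrightarrow(\exists p\vee\exists q)$, $p\to\exists p$, $\exists\exists p\to\exists p$, $(\exists p\wedge\exists q)\to\exists(\exists p\wedge q)$; $\exists\forall p\to\forall p$, $\exists p\to\forall\exists p$; closed under modus ponens, substitution and $\varphi/\forall\varphi$; extensions are supersets closed under these rules. An $\mathsf{MIPC}$-frame is $(X,R,Q)$ with $R$ a partial order, $Q$ a quasi-order, $R\subseteq Q$, and $xQy$ implying $\exists z$ with $xRz$ and $zE_Qy$, where $xE_Qy$ iff $xQy$ and $yQx$. Valuations assign $R$-upsets to letters; intuitionistic connectives are interpreted as usual via $R$; $x\vDash\forall\varphi$ iff every $y$ with $xQy$ satisfies $\varphi$; $x\vDash\exists\varphi$ iff some $y$ with $xE_Qy$ satisfies $\varphi$. $\mathsf{L}$ is Kripke complete if it equals the set of formulas valid on all $\mathsf{MIPC}$-frames validating $\mathsf{L}$.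 $\mathsf{MS4}$ is the smallest set of formulas in the classical bimodal language $\mathcal{L}_{\Box\forall}$ containing all classical tautologies, the $\mathsf{S4}$ axioms for $\Box$, the $\mathsf{S5}$ axioms for $\forall$, and $\Box\forall p\to\forall\Box p$, closed under modus ponens, substitution, $\Box$- and $\forall$-necessitation. Gödel translation: $\bot^t=\bot$, $p^t=\Box p$, $(\varphi\wedge\psi)^t=\varphi^t\wedge\psi^t$, $(\varphi\vee\psi)^t=\varphi^t\vee\psi^t$, $(\varphi\to\psi)^t=\Box(\neg\varphi^t\vee\psi^t)$, $(\forall\varphi)^t=\Box\forall\varphi^t$, $(\exists\varphi)^t=\neg\forall\neg\varphi^t$. *)

From Stdlib Require Import Arith.

Inductive iform : Type :=
| IVar : nat -> iform
| IBot : iform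
| IAnd : iform -> iform -> iform
| IOr  : iform -> iform -> iform
| IImp : iform -> iform -> iform
| IAll : iform -> iform
| IEx  : iform -> iform.

Definition IIff (a b : iform) : iform := IAnd (IImp a b) (IImp b a).

Fixpoint isubst (s : nat -> iform) (f : iform) : iform :=
  match f with
  | IVar n => s n
  | IBot => IBot
  | IAnd a b => IAnd (isubst s a) (isubst s b)
  | IOr a b => IOr (isubst s a) (isubst s b)
  | IImp a b => IImp (isubst s a) (isubst s b)
  | IAll a => IAll (isubst s a)
  | IEx a => IEx (isubst s a)
  end.

Fixpoint iprop (f : iform) : Prop :=
  match f with
  | IVar _ | IBot => True
  | IAnd a b | IOr a b | IImp a b => iprop a /\ iprop b
  | IAll _ | IEx _ => False
  end.

Inductive IPC : iform -> Prop :=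
| ipc_k  : forall a b, IPC (IImp a (IImp b a))
| ipc_s  : forall a b c,
    IPC (IImp (IImp a (IImp b c)) (IImp (IImp a b) (IImp a c)))
| ipc_andl : forall a b, IPC (IImp (IAnd a b) a)
| ipc_andr : forall a b, IPC (IImp (IAnd a b) b)
| ipc_andi : forall a b, IPC (IImp a (IImp b (IAnd a b)))
| ipc_orl  : forall a b, IPC (IImp a (IOr a b))
| ipc_orr  : forall a b, IPC (IImp b (IOr a b))
| ipc_ore  : forall a b c,
    IPC (IImp (IImp a c) (IImp (IImp b c) (IImp (IOr a b) c)))
| ipc_efq  : forall a, IPC (IImp IBot a)
| ipc_mp   : forall a b, IPC (IImp a b) -> IPC a -> IPC b.

Definition IPC_thm (f : iform) : Prop := iprop f /\ IPC f.

Definition p0 := IVar 0.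
Definition q0 := IVar 1.

Inductive MIPC_ax : iform -> Prop :=
| ax_all_and : MIPC_ax (IIff (IAll (IAnd p0 q0)) (IAnd (IAll p0) (IAll q0)))
| ax_all_T   : MIPC_ax (IImp (IAll p0) p0)
| ax_all_4   : MIPC_ax (IImp (IAll p0) (IAll (IAll p0)))
| ax_ex_or   : MIPC_ax (IIff (IEx (IOr p0 q0)) (IOr (IEx p0) (IEx q0)))
| ax_ex_T    : MIPC_ax (IImp p0 (IEx p0))
| ax_ex_4    : MIPC_ax (IImp (IEx (IEx p0)) (IEx p0))
| ax_ex_and  : MIPC_ax (IImp (IAnd (IEx p0) (IEx q0)) (IEx (IAnd (IEx p0) q0)))
| ax_ex_all  : MIPC_ax (IImp (IEx (IAll p0)) (IAll p0))
| ax_ex_B    : MIPC_ax (IImp (IEx p0) (IAll (IEx p0))).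

Inductive MIPC : iform -> Prop :=
| mipc_ipc : forall f, IPC_thm f -> MIPC f
| mipc_ax  : forall f, MIPC_ax f -> MIPC f
| mipc_mp  : forall a b, MIPC (IImp a b) -> MIPC a -> MIPC b
| mipc_sub : forall s f, MIPC f -> MIPC (isubst s f)
| mipc_gen : forall f, MIPC f -> MIPC (IAll f).

Definition MIPC_extension (L : iform -> Prop) : Prop :=
  (forall f, MIPC f -> L f) /\
  (forall a b, L (IImp a b) -> L a -> L b) /\
  (forall s f, L f -> L (isubst s f)) /\
  (forall f, L f -> L (IAll f)).

Definition EQ {X : Type} (Q : X -> X -> Prop) (x y : X) : Prop := Q x y /\ Q y x.

Definition MIPC_frame {X : Type} (R Q : X -> X -> Prop) : Prop :=
  (forall x, R x x) /\ (forall x y z, R x y -> R y z -> R x z) /\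
  (forall x y, R x y -> R y x -> x = y) /\
  (forall x, Q x x) /\ (forall x y z, Q x y -> Q y z -> Q x z) /\
  (forall x y, R x y -> Q x y) /\
  (forall x y, Q x y -> exists z, R x z /\ EQ Q z y).

Fixpoint isat {X : Type} (R Q : X -> X -> Prop) (V : nat -> X -> Prop)
  (x : X) (f : iform) : Prop :=
  match f with
  | IVar n => V n x
  | IBot => False
  | IAnd a b => isat R Q V x a /\ isat R Q V x b
  | IOr a b => isat R Q V x a \/ isat R Q V x b
  | IImp a b => forall y, R x y -> isat R Q V y a -> isat R Q V y b
  | IAll a => forall y, Q x y -> isat R Q V y a
  | IEx a => exists y, EQ Q x y /\ isat R Q V y a
  end.

Definition upset_valuation {X : Type} (R : X -> X -> Prop) (V : nat -> X -> Prop) :=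
  forall n x y, R x y -> V n x -> V n y.

Definition frame_valid {X : Type} (R Q : X -> X -> Prop) (f : iform) : Prop :=
  forall V, upset_valuation R V -> forall x, isat R Q V x f.

Definition frame_validates {X : Type} (R Q : X -> X -> Prop) (L : iform -> Prop) :=
  forall f, L f -> frame_valid R Q f.

Definition Kripke_complete (L : iform -> Prop) : Prop :=
  forall f, L f <->
    (forall (X : Type) (R Q : X -> X -> Prop),
        MIPC_frame R Q -> frame_validates R Q L -> frame_valid R Q f).

Inductive mform : Type :=
| MVar : nat -> mform
| MBot : mform
| MAnd : mform -> mform -> mform
| MOr  : mform -> mform -> mform
| MImp : mform -> mform -> mform
| MBox : mform -> mform
| MAll : mform -> mform.

Definition MNeg (a : mform) : mform := MImp a MBot.

Fixpoint msubst (s : nat -> mform) (f : mform) : mform :=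
  match f with
  | MVar n => s n
  | MBot => MBot
  | MAnd a b => MAnd (msubst s a) (msubst s b)
  | MOr a b => MOr (msubst s a) (msubst s b)
  | MImp a b => MImp (msubst s a) (msubst s b)
  | MBox a => MBox (msubst s a)
  | MAll a => MAll (msubst s a)
  end.

Fixpoint mprop (f : mform) : Prop :=
  match f with
  | MVar _ | MBot => True
  | MAnd a b | MOr a b | MImp a b => mprop a /\ mprop b
  | MBox _ | MAll _ => False
  end.

Fixpoint beval (v : nat -> bool) (f : mform) : bool :=
  match f with
  | MVar n => v n
  | MBot => false
  | MAnd a b => beval v a && beval v b
  | MOr a b => beval v a || beval v b
  | MImp a b => implb (beval v a) (beval v b)
  | MBox a => beval v a   (* irrelevant: only used on modality-free formulas *)
  | MAll a => beval v a
  end.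

Definition tautology (f : mform) : Prop := mprop f /\ forall v, beval v f = true.

Definition mp0 := MVar 0.
Definition mq0 := MVar 1.

Inductive MS4_ax : mform -> Prop :=
| ms4_box_K : MS4_ax (MImp (MBox (MImp mp0 mq0)) (MImp (MBox mp0) (MBox mq0)))
| ms4_box_T : MS4_ax (MImp (MBox mp0) mp0)
| ms4_box_4 : MS4_ax (MImp (MBox mp0) (MBox (MBox mp0)))
| ms4_all_K : MS4_ax (MImp (MAll (MImp mp0 mq0)) (MImp (MAll mp0) (MAll mq0)))
| ms4_all_T : MS4_ax (MImp (MAll mp0) mp0)
| ms4_all_5 : MS4_ax (MImp (MNeg (MAll mp0)) (MAll (MNeg (MAll mp0))))
| ms4_lt    : MS4_ax (MImp (MBox (MAll mp0)) (MAll (MBox mp0))).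

Inductive MS4plus (Gamma : mform -> Prop) : mform -> Prop :=
| ms4_taut : forall f, tautology f -> MS4plus Gamma f
| ms4_ax   : forall f, MS4_ax f -> MS4plus Gamma f
| ms4_hyp  : forall f, Gamma f -> MS4plus Gamma f
| ms4_mp   : forall a b, MS4plus Gamma (MImp a b) -> MS4plus Gamma a -> MS4plus Gamma b
| ms4_sub  : forall s f, MS4plus Gamma f -> MS4plus Gamma (msubst s f)
| ms4_nbox : forall f, MS4plus Gamma f -> MS4plus Gamma (MBox f)
| ms4_nall : forall f, MS4plus Gamma f -> MS4plus Gamma (MAll f).

Definition MS4 : mform -> Prop := MS4plus (fun _ => False).

Fixpoint godel (f : iform) : mform :=
  match f with
  | IVar n => MBox (MVar n)
  | IBot => MBot
  | IAnd a b => MAnd (godel a) (godel b)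
  | IOr a b => MOr (godel a) (godel b)
  | IImp a b => MBox (MOr (MNeg (godel a)) (godel b))
  | IAll a => MBox (MAll (godel a))
  | IEx a => MNeg (MAll (MNeg (godel a)))
  end.

Definition tauL (L : iform -> Prop) : mform -> Prop :=
  MS4plus (fun g => exists f, L f /\ g = godel f).

(** An MIPC-frame (X, R, Q) is also a Kripke frame for MS4, reading [□] along
    R and the classical [∀] along the equivalence E_Q.  On such a frame the
    Gödel translation of φ holds at x under a valuation U exactly when φ holds
    at x under the R-interior of U, which is an upset.  Hence every theorem of
    τL is true in every model on a frame for L, so φ^t ∈ τL makes φ valid on
    all frames for L (for an upset valuation the interior changes nothing),
    and Kripke completeness gives L ⊢ φ. *)

From Stdlib Require Import Classical ClassicalEpsilon.

Section FrameSemantics.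

Context {X : Type} (R Q : X -> X -> Prop).

Fixpoint msat (U : nat -> X -> Prop) (x : X) (f : mform) : Prop :=
  match f with
  | MVar n => U n x
  | MBot => False
  | MAnd a b => msat U x a /\ msat U x b
  | MOr a b => msat U x a \/ msat U x b
  | MImp a b => msat U x a -> msat U x b
  | MBox a => forall y, R x y -> msat U y a
  | MAll a => forall y, EQ Q x y -> msat U y a
  end.

Definition interior (U : nat -> X -> Prop) (n : nat) (x : X) : Prop :=
  forall y, R x y -> U n y.

Lemma msat_msubst s f U x :
  msat U x (msubst s f) <-> msat (fun n y => msat U y (s n)) x f.
Proof.
  revert x; induction f as [n| |a IHa b IHb|a IHa b IHb|a IHa b IHb|a IHa|a IHa];
    intros x; simpl; try tauto.
  - rewrite IHa, IHb; tauto.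
  - rewrite IHa, IHb; tauto.
  - rewrite IHa, IHb; tauto.
  - split; intros H y Hy; apply IHa; auto.
  - split; intros H y Hy; apply IHa; auto.
Qed.

Lemma isat_ext (V V' : nat -> X -> Prop) :
  (forall n y, V n y <-> V' n y) -> forall f x, isat R Q V x f <-> isat R Q V' x f.
Proof.
  intros HV f; induction f as [n| |a IHa b IHb|a IHa b IHb|a IHa b IHb|a IHa|a IHa];
    intros x; simpl; try tauto.
  - apply HV.
  - rewrite IHa, IHb; tauto.
  - rewrite IHa, IHb; tauto.
  - split; intros H y Hy; [rewrite <- IHa, <- IHb | rewrite IHa, IHb]; auto.
  - split; intros H y Hy; [rewrite <- IHa | rewrite IHa]; auto.
  - split; intros [y [Hxy Hy]]; exists y; split; auto; [rewrite <- IHa | rewrite IHa]; auto.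
Qed.

Lemma msat_tautology f U x : tautology f -> msat U x f.
Proof.
  intros [Hprop Htrue].
  set (v n := if excluded_middle_informative (U n x) then true else false).
  assert (Hv : forall n, v n = true <-> U n x).
  { intro n; unfold v; destruct (excluded_middle_informative (U n x));
      split; congruence || tauto. }
  enough (Hf : msat U x f <-> beval v f = true) by (apply Hf, Htrue).
  clear Htrue; induction f as [n| |a IHa b IHb|a IHa b IHb|a IHa b IHb|a IHa|a IHa];
    simpl in *; try tauto.
  - symmetry; apply Hv.
  - split; [tauto | discriminate].
  - destruct Hprop as [Ha Hb]; rewrite (IHa Ha), (IHb Hb).
    destruct (beval v a), (beval v b); simpl; intuition congruence.
  - destruct Hprop as [Ha Hb]; rewrite (IHa Ha), (IHb Hb).
    destruct (beval v a), (beval v b); simpl; intuition congruence.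
  - destruct Hprop as [Ha Hb]; rewrite (IHa Ha), (IHb Hb).
    destruct (beval v a), (beval v b); simpl; intuition congruence.
Qed.

Hypothesis frame : MIPC_frame R Q.

Lemma EQ_refl x : EQ Q x x.
Proof. destruct frame as (_ & _ & _ & Qrefl & _); split; auto. Qed.

Lemma EQ_euclid x y z : EQ Q x y -> EQ Q x z -> EQ Q y z.
Proof.
  destruct frame as (_ & _ & _ & _ & Qtrans & _).
  intros [Hxy Hyx] [Hxz Hzx]; split; eauto.
Qed.

Lemma msat_MS4_ax f U x : MS4_ax f -> msat U x f.
Proof.
  destruct frame as (Rrefl & Rtrans & _ & _ & Qtrans & RQ & Qfactor).
  intros []; simpl; eauto.
  - intros H; apply H, EQ_refl.
  - intros H y Hxy Hneg. apply H; intros w Hxw. apply Hneg, (EQ_euclid x); auto.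
  - intros H y [Hxy Hyx] w Hyw.
    assert (Hxw : Q x w) by eauto.
    destruct (Qfactor x w Hxw) as [z [Hxz Hzw]].
    apply (H z Hxz w Hzw).
Qed.

Lemma msat_godel f U x :
  msat U x (godel f) <-> isat R Q (interior U) x f.
Proof.
  destruct frame as (_ & _ & _ & _ & Qtrans & RQ & Qfactor).
  revert x; induction f as [n| |a IHa b IHb|a IHa b IHb|a IHa b IHb|a IHa|a IHa];
    intros x; simpl; try tauto.
  - rewrite IHa, IHb; tauto.
  - rewrite IHa, IHb; tauto.
  - split; intros H y Hxy.
    + rewrite <- IHa, <- IHb; destruct (H y Hxy); tauto.
    + rewrite IHa, IHb; apply imply_to_or, H, Hxy.
  - split.
    + intros H z Hxz; destruct (Qfactor x z Hxz) as [w [Hxw Hwz]].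
      rewrite <- IHa; apply (H w Hxw z Hwz).
    + intros H y Hxy z [Hyz Hzy]; rewrite IHa; apply H; eauto.
  - split.
    + intros H; apply NNPP; intro Hnone; apply H; intros y Hxy Hy.
      apply Hnone; exists y; split; auto; rewrite <- IHa; auto.
    + intros [y [Hxy Hy]] H; apply (H y Hxy); rewrite IHa; auto.
Qed.

Lemma interior_upset_valuation U : upset_valuation R (interior U).
Proof.
  destruct frame as (_ & Rtrans & _).
  intros n x y Hxy Hx z Hyz; apply Hx; eauto.
Qed.

Lemma interior_upset V : upset_valuation R V -> forall n x, interior V n x <-> V n x.
Proof.
  destruct frame as (Rrefl & _).
  intros HV n x; split; [intros H; apply H, Rrefl | intros Hx y Hxy; apply (HV n x); auto].
Qed.

Lemma tauL_sound L : frame_validates R Q L -> forall g, tauL L g -> forall U x, msat U x g.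
Proof.
  intros HL g Hg; induction Hg as [f Hf|f Hf|f Hf|a b _ IHab _ IHa|s f _ IHf|f _ IHf|f _ IHf];
    intros U x; simpl.
  - apply msat_tautology, Hf.
  - apply msat_MS4_ax, Hf.
  - destruct Hf as [f0 [Hf0 ->]]; apply msat_godel, (HL f0 Hf0), interior_upset_valuation.
  - apply (IHab U x), IHa.
  - apply msat_msubst, IHf.
  - intros; apply IHf.
  - intros; apply IHf.
Qed.

End FrameSemantics.

(* Kripke completeness alone yields the converse. *)
Theorem proposition3p9 (L : iform -> Prop) :
  MIPC_extension L -> Kripke_complete L ->
  forall phi : iform, L phi <-> tauL L (godel phi).
Proof.
  intros _ Hcomplete phi; split.
  - intro Hphi; apply ms4_hyp; exists phi; auto.
  - intro Htau; apply Hcomplete; intros X R Q frame HL V HV x.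
    apply (isat_ext R Q (interior R V)).
    + apply (interior_upset R Q frame), HV.
    + apply (msat_godel R Q frame), (tauL_sound R Q frame L HL _ Htau).
Qed.
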